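(* Let $\Gamma$ be a skew-symmetric graph with three vertices $\{1,2,3\}$ and adjacency entries $a_{1,2}=1$, $a_{1,3}=\alpha$, $a_{2,3}=\beta$ ($\alpha,\beta\in\mathbb F$). Then $\Gamma$ has the Kahan-Poisson property if and only if $(\alpha,\beta)\in\{(0,0),(0,-1),(1,0),(1,-1),(1,1),(-1,-1)\}$.
   Context: $\mathbb F\in\{\mathbb R,\mathbb C\}$. A skew-symmetric graph $\Gamma=(S,A)$ has $A=(a_{i,j})$ skew-symmetric over $\mathbb F$. Its Poisson bracket on $\mathbb F(x_1,x_2,x_3)$ is $\{x_i,x_j\}=a_{i,j}x_ix_j$; its Kahan morphism is $K(x_i)=\tilde x_i$, where $\tilde x_i$ is the unique solution of the linear system $\tilde x_i-x_i=\tilde x_i\sum_ja_{i,j}x_j+x_i\sum_ja_{i,j}\tilde x_j$; $\Gamma$ has the Kahan-Poisson property if $\{\tilde x_i,\tilde x_j\}=a_{i,j}\tilde x_i\tilde x_j$ for all $i,j$. *)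

From HB Require Import structures.
From mathcomp Require Import all_boot all_order all_algebra.
From mathcomp Require Import fraction.
From mathcomp Require Import mpoly.
From mathcomp Require Import reals.
From mathcomp.real_closed Require Import complex.

Set Implicit Arguments.
Unset Strict Implicit.
Unset Printing Implicit Defensive.

Import GRing.Theory Num.Theory.
Local Open Scope ring_scope.

Section Kahan.
Variable F : fieldType.

(* The field of rational functions F(x_1, x_2, x_3); variables indexed by 'I_3
   (index 0,1,2 stand for the vertices 1,2,3). *)
Definition ratfun := {fraction {mpoly F[3]}}.
Local Notation "x %:F" := (@FracField.tofrac {mpoly F[3]} x).

Definition xvar (i : 'I_3) : ratfun := ('X_i)%:F.

Definition cst (c : F) : ratfun := (c%:MP)%:F.

(* formal partial derivative d/dx_i on F(x_1,x_2,x_3), computed by the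
   quotient rule on a representative numerator/denominator pair
   (the result does not depend on the representative). *)
Definition pderiv (i : 'I_3) (f : ratfun) : ratfun :=
  let r := repr f in
  let n := \n_r in let d := \d_r in
  ((mderiv i n)%:F * d%:F - n%:F * (mderiv i d)%:F) / (d%:F ^+ 2).

Definition skew_symmetric (A : 'M[F]_3) : Prop := A^T = - A.

Definition pbracket (A : 'M[F]_3) (f g : ratfun) : ratfun :=
  \sum_(i < 3) \sum_(j < 3)
    cst (A i j) * xvar i * xvar j * pderiv i f * pderiv j g.

Definition kahan_system (A : 'M[F]_3) (xt : 'I_3 -> ratfun) : Prop :=
  forall i : 'I_3,
    xt i - xvar i = xt i * (\sum_(j < 3) cst (A i j) * xvar j)
                    + xvar i * (\sum_(j < 3) cst (A i j) * xt j).

(* Kahan-Poisson property: the (unique) solution xt = K(x) of the Kahan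
   system satisfies {xt_i, xt_j} = a_ij xt_i xt_j for all i, j. *)
Definition kahan_poisson (A : 'M[F]_3) : Prop :=
  forall xt : 'I_3 -> ratfun, kahan_system A xt ->
    forall i j : 'I_3, pbracket A (xt i) (xt j) = cst (A i j) * xt i * xt j.

Definition adj3 (alpha beta : F) : 'M[F]_3 :=
  \matrix_(i < 3, j < 3)
    match nat_of_ord i, nat_of_ord j with
    | 0, 1 => 1 | 1, 0 => -1
    | 0, 2 => alpha | 2, 0 => - alpha
    | 1, 2 => beta | 2, 1 => - beta
    | _, _ => 0
    end.

Definition good_pair (alpha beta : F) : Prop :=
  (alpha = 0 /\ beta = 0) \/ (alpha = 0 /\ beta = -1) \/
  (alpha = 1 /\ beta = 0) \/ (alpha = 1 /\ beta = -1) \/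
  (alpha = 1 /\ beta = 1) \/ (alpha = -1 /\ beta = -1).

Lemma adj3_skew (alpha beta : F) : skew_symmetric (adj3 alpha beta).
Proof.
apply/matrixP => i j; rewrite !mxE.
by case: i => [[|[|[|?]]] ?]; case: j => [[|[|[|?]]] ?] //=; rewrite ?opprK ?oppr0.
Qed.

End Kahan.

From HB Require Import structures.
From mathcomp Require Import all_boot all_order all_algebra.
From mathcomp Require Import reals.
From mathcomp.real_closed Require Import complex.
From mathcomp Require Import fraction mpoly generic_quotient ring.

Set Implicit Arguments.
Unset Strict Implicit.
Unset Printing Implicit Defensive.

Import GRing.Theory Num.Theory.
Local Open Scope ring_scope.
Local Notation "x %:F" := (@FracField.tofrac _ x).

(* Proof plan.  Write (x, y, z) for (x_1, x_2, x_3) and (a, b) for (alpha,    *)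
(* beta).  The Kahan system of adj3 a b is a linear system M(x) xt = x whose  *)
(* determinant D and Cramer numerators N_k are explicit polynomials with      *)
(* D(0) = 1; hence its unique solution is xt_k = N_k / D.  By the quotient    *)
(* rule d_p xt_k = U_kp / D^2 with U_kp = (d_p N_k) D - N_k (d_p D), so       *)
(*      {xt_i, xt_j} - a_ij xt_i xt_j = E_ij / D^4                            *)
(* for an explicit polynomial E_ij (the "defect"), and the Kahan-Poisson      *)
(* property is equivalent to E_ij = 0 in F[x, y, z] for all i, j.             *)
(*   All these polynomials are written once as ring expressions in (a, b, x,  *)
(* y, z) over an arbitrary commutative ring, so that they can be specialised  *)
(* along ring morphisms.  Sufficiency: for the six listed pairs each E_ij     *)
(* vanishes identically (a ring identity).  Necessity: along the curves       *)
(* (t, t^2, t^2) and (t^2, t, t^2) the lowest order terms of E_12 and E_02    *)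
(* are 2 (a^3 - a) t^7 and 2 (b - b^3) t^7, so a, b are in {0, 1, -1}; of     *)
(* the nine resulting pairs, the three bad ones are ruled out by evaluating   *)
(* some E_ij at one integer point, where it is a nonzero integer.             *)

Section KahanPolynomials.
Variable R : comPzRingType.
Implicit Types (a b x y z t : R) (k p i j : nat).

(* The Kahan system of adj3 a b reads M t = (x, y, z) with
   M = [:: [:: 1 - y - a z, - x, - a x];
           [:: y, 1 + x - b z, - b y];
           [:: a z, b z, 1 + a x + b y]].
   kahan_den is det M, kahan_num k the Cramer numerator of t_k, and
   kahan_adj k i the (k, i) entry of the adjugate of M. *)
Definition kahan_den a b x y z : R :=
  1 - b*z - a*z + a*b*z*z - y + b*y + b*y*z - a*b*y*z - b*y*y + x + a*x
  - a*x*z - a*b*x*z + b*x*y - a*x*y + a*x*x.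

Definition kahan_num k a b x y z : R :=
  match k with
  | 0 => x - b*x*z + a*x*z - a*b*x*z*z + x*y + b*x*y + b*x*y*z - a*b*x*y*z
         + b*x*y*y + x*x + a*x*x + a*x*x*z - a*b*x*x*z + b*x*x*y + a*x*x*y
         + a*x*x*x
  | 1 => y + b*y*z - a*y*z - a*b*y*z*z - y*y + b*y*y - b*y*y*z - a*b*y*y*z
         - b*y*y*y - x*y + a*x*y - a*x*y*z - a*b*x*y*z - b*x*y*y - a*x*y*y
         - a*x*x*y
  | _ => z - b*z*z - a*z*z + a*b*z*z*z - y*z - b*y*z + b*y*z*z + a*b*y*z*z
         + b*y*y*z + x*z - a*x*z - a*x*z*z + a*b*x*z*z + b*x*y*z - a*x*y*z
         - a*x*x*z
  end.

Definition kahan_adj k i a b x y z : R :=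
  match k, i with
  | 0, 0 => 1 - b*z + b*y + x + a*x - a*b*x*z + b*x*y + a*x*x
  | 0, 1 => x - a*b*x*z + b*x*y + a*x*x
  | 0, _ => a*x - a*b*x*z + b*x*y + a*x*x
  | 1, 0 => - y - a*b*y*z - b*y*y - a*x*y
  | 1, 1 => 1 - a*z - y + b*y - a*b*y*z - b*y*y + a*x - a*x*y
  | 1, _ => b*y - a*b*y*z - b*y*y - a*x*y
  | _, 0 => - a*z + a*b*z*z + b*y*z - a*x*z
  | _, 1 => - b*z + a*b*z*z + b*y*z - a*x*z
  | _, _ => 1 - b*z - a*z + a*b*z*z - y + b*y*z + x - a*x*z
  end.

Definition kahan_den_d p a b x y z : R :=
  match p with
  | 0 => 1 + a - a*z - a*b*z + b*y - a*y + 2*a*x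
  | 1 => - 1 + b + b*z - a*b*z - 2*b*y + b*x - a*x
  | _ => - b - a + 2*a*b*z + b*y - a*b*y - a*x - a*b*x
  end.

Definition kahan_num_d k p a b x y z : R :=
  match k, p with
  | 0, 0 => 1 - b*z + a*z - a*b*z*z + y + b*y + b*y*z - a*b*y*z + b*y*y + 2*x
            + 2*a*x + 2*a*x*z - 2*a*b*x*z + 2*b*x*y + 2*a*x*y + 3*a*x*x
  | 0, 1 => x + b*x + b*x*z - a*b*x*z + 2*b*x*y + b*x*x + a*x*x
  | 0, _ => - b*x + a*x - 2*a*b*x*z + b*x*y - a*b*x*y + a*x*x - a*b*x*x
  | 1, 0 => - y + a*y - a*y*z - a*b*y*z - b*y*y - a*y*y - 2*a*x*y
  | 1, 1 => 1 + b*z - a*z - a*b*z*z - 2*y + 2*b*y - 2*b*y*z - 2*a*b*y*z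
            - 3*b*y*y - x + a*x - a*x*z - a*b*x*z - 2*b*x*y - 2*a*x*y - a*x*x
  | 1, _ => b*y - a*y - 2*a*b*y*z - b*y*y - a*b*y*y - a*x*y - a*b*x*y
  | _, 0 => z - a*z - a*z*z + a*b*z*z + b*y*z - a*y*z - 2*a*x*z
  | _, 1 => - z - b*z + b*z*z + a*b*z*z + 2*b*y*z + b*x*z - a*x*z
  | _, _ => 1 - 2*b*z - 2*a*z + 3*a*b*z*z - y - b*y + 2*b*y*z + 2*a*b*y*z
            + b*y*y + x - a*x - 2*a*x*z + 2*a*b*x*z + b*x*y - a*x*y - a*x*x
  end.

Definition adj_entry i j a b : R :=
  match i, j with
  | 0, 1 => 1 | 1, 0 => -1
  | 0, 2 => a | 2, 0 => - a
  | 1, 2 => b | 2, 1 => - b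
  | _, _ => 0
  end.

(* the quotient rule: d_p (N_k / D) = deriv_num k p / D^2 *)
Definition deriv_num k p a b x y z : R :=
  kahan_num_d k p a b x y z * kahan_den a b x y z
  - kahan_num k a b x y z * kahan_den_d p a b x y z.

(* D^4 ({f, g} - c f g) for f = n_i / D and g = n_j / D with gradients
   (u_p / D^2) and (v_p / D^2), for the bracket of adj3 a b *)
Definition bracket_form a b x y z (u0 u1 u2 v0 v1 v2 c ni nj d : R) : R :=
  x*y*(u0*v1 - u1*v0) + a*x*z*(u0*v2 - u2*v0) + b*y*z*(u1*v2 - u2*v1)
  - c*ni*nj*d^+2.

(* the defect E_ij: {xt_i, xt_j} - a_ij xt_i xt_j = E_ij / D^4 *)
Definition defect i j a b x y z : R :=
  bracket_form a b x y z
    (deriv_num i 0 a b x y z) (deriv_num i 1 a b x y z) (deriv_num i 2 a b x y z)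
    (deriv_num j 0 a b x y z) (deriv_num j 1 a b x y z) (deriv_num j 2 a b x y z)
    (adj_entry i j a b) (kahan_num i a b x y z) (kahan_num j a b x y z)
    (kahan_den a b x y z).

End KahanPolynomials.

Section Morphisms.
Variables (R S : comPzRingType) (f : {rmorphism R -> S}) (a b x y z : R).

Ltac push_morph := rewrite
  ?(rmorphD, rmorphB, rmorphN, rmorphM, rmorph1, rmorph0, rmorphXn, rmorph_nat).

Lemma kahan_den_morph :
  f (kahan_den a b x y z) = kahan_den (f a) (f b) (f x) (f y) (f z).
Proof. by rewrite /kahan_den; push_morph. Qed.

Lemma kahan_num_morph k :
  f (kahan_num k a b x y z) = kahan_num k (f a) (f b) (f x) (f y) (f z).
Proof. by case: k => [|[|k]]; rewrite /kahan_num; push_morph. Qed.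

Lemma deriv_num_morph k p :
  f (deriv_num k p a b x y z) = deriv_num k p (f a) (f b) (f x) (f y) (f z).
Proof.
rewrite /deriv_num rmorphB !rmorphM kahan_den_morph kahan_num_morph.
by case: k => [|[|k]]; case: p => [|[|p]]; rewrite /kahan_num_d /kahan_den_d;
  push_morph.
Qed.

Lemma adj_entry_morph i j : f (adj_entry i j a b) = adj_entry i j (f a) (f b).
Proof.
by case: i => [|[|[|i]]]; case: j => [|[|[|j]]]; rewrite /=; push_morph.
Qed.

Lemma bracket_form_morph (u0 u1 u2 v0 v1 v2 c ni nj d : R) :
  f (bracket_form a b x y z u0 u1 u2 v0 v1 v2 c ni nj d) =
  bracket_form (f a) (f b) (f x) (f y) (f z)
    (f u0) (f u1) (f u2) (f v0) (f v1) (f v2) (f c) (f ni) (f nj) (f d).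
Proof. by rewrite /bracket_form; push_morph. Qed.

Lemma defect_morph i j :
  f (defect i j a b x y z) = defect i j (f a) (f b) (f x) (f y) (f z).
Proof.
by rewrite /defect bracket_form_morph !deriv_num_morph adj_entry_morph
  !kahan_num_morph kahan_den_morph.
Qed.

End Morphisms.

Section DefectIdentities.
Variable R : comPzRingType.
Implicit Types (a b x y z t : R).

Lemma adj_entry_antisym i j a b : adj_entry j i a b = - adj_entry i j a b.
Proof.
by case: i => [|[|[|i]]]; case: j => [|[|[|j]]]; rewrite /= ?opprK ?oppr0.
Qed.

Lemma defect_antisym i j a b x y z :
  defect j i a b x y z = - defect i j a b x y z.
Proof. rewrite /defect adj_entry_antisym /bracket_form; ring. Qed.

Lemma adj_entry_diag i a b : adj_entry i i a b = 0.
Proof. by case: i => [|[|[|i]]]. Qed.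

Lemma defect_diag i a b x y z : defect i i a b x y z = 0.
Proof. rewrite /defect adj_entry_diag /bracket_form; ring. Qed.

Lemma defect_eq0_of3 a b x y z :
  defect 0 1 a b x y z = 0 -> defect 0 2 a b x y z = 0 ->
  defect 1 2 a b x y z = 0 -> forall i j : 'I_3, defect i j a b x y z = 0.
Proof.
move=> h01 h02 h12 [[|[|[|i]]] hi] [[|[|[|j]]] hj] //=;
  rewrite ?defect_diag // ?h01 ?h02 ?h12 //;
  by rewrite defect_antisym ?h01 ?h02 ?h12 oppr0.
Qed.

Ltac unfold_defect :=
  rewrite /defect /bracket_form /deriv_num /kahan_num /kahan_num_d
    /kahan_den_d /kahan_den /=.

Lemma good_defect_eq0 (F : fieldType) (f : {rmorphism F -> R}) (a b : F) x y z :
  good_pair a b -> forall i j : 'I_3, defect i j (f a) (f b) x y z = 0.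
Proof.
case=> [[-> ->]|[[-> ->]|[[-> ->]|[[-> ->]|[[-> ->]|[-> ->]]]]]];
  rewrite ?rmorphN ?rmorph1 ?rmorph0;
  by apply: defect_eq0_of3; unfold_defect; ring.
Qed.

(* The higher order parts cert_a, cert_b
   are explicit polynomials, recorded only to certify the expansions. *)
Definition cert_a a b t : R :=
  (- 8*a - 4*a^+2 + 8*a^+3 + 4*a^+4)
  + (- 2*b - 6*a - 2*b^+2 + 4*a*b - 16*a^+2 - 2*a^+2*b + 8*a^+3 + 2*a^+2*b^+2
    + 12*a^+4 + 2*a^+5) * t
  + (- 4*b + 8*a - 4*b^+2 - 8*a*b - 12*a*b^+2 + 20*a^+2*b - 12*a^+3
    + 12*a^+2*b^+2 + 4*a^+3*b^+2 - 8*a^+4*b + 4*a^+5) * t ^+ 2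
  + (2*b + 6*a + 4*b^+2 - 36*a*b + 40*a^+2 + 2*b^+3 - 2*a*b^+2 + 12*a^+2*b
    + 2*a^+3 + 12*a*b^+3 - 10*a^+2*b^+2 + 36*a^+3*b - 40*a^+4 + 2*a^+2*b^+3
    + 6*a^+3*b^+2 - 22*a^+4*b - 8*a^+5 + 2*a^+4*b^+2 - 8*a^+5*b) * t ^+ 3
  + (4*b - 4*a + 4*a*b + 12*a^+2 - 4*b^+3 + 60*a*b^+2 - 56*a^+2*b + 44*a^+3
    + 20*a*b^+3 - 8*a^+2*b^+2 + 20*a^+3*b - 28*a^+4 + 20*a^+2*b^+3
    - 52*a^+3*b^+2 + 12*a^+4*b - 24*a^+5 - 4*a^+3*b^+3 - 16*a^+5*b) * t ^+ 4
  + (- 2*b - 12*b^+2 + 36*a*b - 20*a^+2 - 6*b^+3 - 8*a*b^+2 + 42*a^+2*b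
    - 4*a^+3 + 4*b^+4 - 40*a*b^+3 + 86*a^+2*b^+2 - 64*a^+3*b + 24*a^+4
    - 4*a^+2*b^+3 - 52*a^+3*b^+2 + 28*a^+4*b - 4*a^+2*b^+4 - 8*a^+3*b^+3
    - 26*a^+4*b^+2 + 24*a^+5*b - 6*a^+4*b^+3 + 12*a^+5*b^+2) * t ^+ 5
  + (4*b^+2 - 8*a*b + 8*b^+3 - 84*a*b^+2 + 88*a^+2*b - 32*a^+3 + 4*b^+4
    - 24*a*b^+3 - 48*a^+2*b^+2 + 48*a^+3*b + 12*a*b^+4 - 116*a^+2*b^+3
    + 92*a^+3*b^+2 - 24*a^+4*b + 32*a^+5 - 12*a^+2*b^+4 - 32*a^+3*b^+3
    + 12*a^+4*b^+2 + 56*a^+5*b - 4*a^+3*b^+4 + 4*a^+4*b^+3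
    + 24*a^+5*b^+2) * t ^+ 6
  + (2*b^+2 - 4*a*b - 12*b^+3 + 22*a*b^+2 - 32*a^+2*b - 14*b^+4 + 52*a*b^+3
    - 102*a^+2*b^+2 + 44*a^+3*b - 16*a^+4 - 14*a^+2*b^+3 - 18*a^+3*b^+2
    + 8*a^+4*b + 16*a^+5 + 8*a^+2*b^+4 - 72*a^+3*b^+3 + 104*a^+4*b^+2
    + 38*a^+4*b^+3 - 8*a^+5*b^+2 + 6*a^+4*b^+4 - 8*a^+5*b^+3) * t ^+ 7
  + (- 4*b^+3 + 20*a*b^+2 - 16*a^+2*b - 20*a*b^+3 + 76*a^+2*b^+2 - 64*a^+3*b
    + 4*b^+5 - 36*a*b^+4 + 88*a^+2*b^+3 - 44*a^+3*b^+2 - 16*a^+4*b - 4*a*b^+5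
    - 12*a^+2*b^+4 + 76*a^+3*b^+3 - 12*a^+4*b^+2 - 32*a^+5*b - 4*a^+2*b^+5
    + 44*a^+3*b^+4 + 4*a^+4*b^+3 - 40*a^+5*b^+2 + 4*a^+3*b^+5 + 4*a^+4*b^+4
    - 16*a^+5*b^+3) * t ^+ 8
  + (4*b^+3 + 2*b^+4 - 8*a*b^+3 + 32*a^+2*b^+2 - 16*a^+3*b - 2*b^+5
    + 6*a*b^+4 - 8*a^+2*b^+3 + 48*a^+3*b^+2 - 32*a^+4*b - 16*a^+2*b^+4
    + 80*a^+3*b^+3 - 48*a^+4*b^+2 - 16*a^+5*b + 4*a^+2*b^+5 + 8*a^+3*b^+4
    + 4*a^+4*b^+3 - 32*a^+5*b^+2 - 2*a^+4*b^+4 - 8*a^+5*b^+3 - 2*a^+4*b^+5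
    + 2*a^+5*b^+4) * t ^+ 9
  + (- 4*b^+4 + 8*a*b^+3 - 4*b^+5 + 12*a*b^+4 + 16*a^+2*b^+4 - 16*a^+3*b^+3
    + 8*a^+2*b^+5 - 16*a^+3*b^+4 - 12*a^+4*b^+4 + 8*a^+5*b^+3 - 4*a^+4*b^+5
    + 4*a^+5*b^+4) * t ^+ 10.

Definition cert_b a b t : R :=
  (4*b^+2 - 4*b^+4)
  + (- 2*b + 2*a - 2*a^+2 + 8*b^+3 - 6*a*b^+2 + 4*b^+4 - 4*a*b^+3
    + 2*a^+2*b^+2 - 2*b^+5) * t
  + (8*b - 4*a - 8*b^+2 + 4*a^+2 - 12*b^+3 + 12*a*b^+2 - 12*a^+2*b + 8*b^+4
    + 8*a*b^+3 - 12*a^+2*b^+2 + 4*b^+5 + 4*a^+2*b^+3) * t ^+ 2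
  + (- 6*b + 6*a + 32*b^+2 - 16*a*b - 8*a^+2 + 6*b^+3 - 44*a*b^+2 + 22*a^+2*b
    + 2*a^+3 - 32*b^+4 + 20*a*b^+3 + 10*a^+2*b^+2 - 12*a^+3*b + 30*a*b^+4
    - 18*a^+2*b^+3 + 2*a^+3*b^+2 + 4*a*b^+5 + 2*a^+2*b^+4) * t ^+ 3
  + (4*b - 4*a - 28*b^+2 + 28*a*b + 28*b^+3 + 32*a*b^+2 - 60*a^+2*b + 4*a^+3
    + 44*b^+4 - 76*a*b^+3 + 8*a^+2*b^+2 + 20*a^+3*b - 16*b^+5 - 36*a*b^+4
    + 68*a^+2*b^+3 - 20*a^+3*b^+2 + 8*a*b^+5 - 4*a^+3*b^+3) * t ^+ 4
  + (2*a + 20*b^+2 - 24*a*b - 36*b^+3 - 10*a*b^+2 + 44*a^+2*b - 6*a^+3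
    - 24*b^+4 + 124*a*b^+3 - 58*a^+2*b^+2 - 24*a^+3*b + 4*a^+4 + 32*b^+5
    + 12*a*b^+4 - 92*a^+2*b^+3 + 60*a^+3*b^+2 - 32*a*b^+5 + 10*a^+2*b^+4
    + 8*a^+3*b^+3 - 4*a^+4*b^+2 - 6*a^+3*b^+4) * t ^+ 5
  + (8*a*b - 4*a^+2 + 32*b^+3 - 24*a*b^+2 - 36*a^+2*b + 8*a^+3 - 128*a*b^+3
    + 120*a^+2*b^+2 + 16*a^+3*b - 4*a^+4 - 32*b^+5 + 56*a*b^+4 + 92*a^+2*b^+3
    - 92*a^+3*b^+2 + 12*a^+4*b + 56*a*b^+5 - 84*a^+2*b^+4 + 8*a^+3*b^+3
    + 12*a^+4*b^+2 - 24*a^+2*b^+5 + 12*a^+3*b^+4 - 4*a^+4*b^+3) * t ^+ 6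
  + (4*a*b - 2*a^+2 - 2*a^+2*b + 16*b^+4 + 52*a*b^+3 - 106*a^+2*b^+2
    + 24*a^+3*b + 2*a^+4 + 16*b^+5 - 88*a*b^+4 - 18*a^+2*b^+3 + 114*a^+3*b^+2
    - 16*a^+4*b - 32*a*b^+5 + 104*a^+2*b^+4 - 56*a^+3*b^+3 - 8*a^+4*b^+2
    + 16*a^+2*b^+5 - 38*a^+3*b^+4 + 16*a^+4*b^+3 - 4*a^+3*b^+5
    + 6*a^+4*b^+4) * t ^+ 7
  + (16*a*b^+2 - 20*a^+2*b + 4*a^+3 - 32*a*b^+3 + 36*a^+2*b^+2 + 4*a^+3*b
    + 80*a*b^+4 - 44*a^+2*b^+3 - 64*a^+3*b^+2 + 28*a^+4*b - 4*a^+5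
    - 100*a^+2*b^+4 + 76*a^+3*b^+3 + 12*a^+4*b^+2 - 4*a^+5*b + 20*a^+3*b^+4
    - 20*a^+4*b^+3 + 4*a^+5*b^+2 + 8*a^+3*b^+5 - 4*a^+4*b^+4
    + 4*a^+5*b^+3) * t ^+ 8
  + (- 4*a^+3 + 16*a*b^+3 - 32*a^+2*b^+2 + 16*a^+3*b + 6*a^+4 - 32*a*b^+4
    + 48*a^+2*b^+3 + 8*a^+3*b^+2 - 10*a^+4*b - 2*a^+5 + 16*a*b^+5
    + 48*a^+2*b^+4 - 96*a^+3*b^+3 + 16*a^+4*b^+2 - 32*a^+2*b^+5 - 4*a^+3*b^+4
    + 24*a^+4*b^+3 + 4*a^+5*b^+2 + 16*a^+3*b^+5 - 6*a^+4*b^+4 + 2*a^+4*b^+5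
    - 2*a^+5*b^+4) * t ^+ 9
  + (- 8*a^+3*b + 4*a^+4 + 12*a^+4*b - 4*a^+5 + 16*a^+3*b^+3 - 16*a^+4*b^+2
    - 16*a^+4*b^+3 + 8*a^+5*b^+2 - 8*a^+3*b^+5 + 12*a^+4*b^+4 + 4*a^+4*b^+5
    - 4*a^+5*b^+4) * t ^+ 10.

Lemma defect_curve_a a b t :
  defect 1 2 a b t (t * t) (t * t) = t ^+ 7 * (2 * (a ^+ 3 - a) + t * cert_a a b t).
Proof. unfold_defect; rewrite /cert_a; ring. Qed.

Lemma defect_curve_b a b t :
  defect 0 2 a b (t * t) t (t * t) = t ^+ 7 * (2 * (b - b ^+ 3) + t * cert_b a b t).
Proof. unfold_defect; rewrite /cert_b; ring. Qed.

Lemma defect_bad_0_1 : defect 0 1 0 1 (-1) (-1) 1 = 32 :> R.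
Proof. unfold_defect; ring. Qed.

Lemma defect_bad_m1_0 : defect 0 1 (-1) 0 1 1 (-1) = 32 :> R.
Proof. unfold_defect; ring. Qed.

Lemma defect_bad_m1_1 : defect 0 2 (-1) 1 1 1 2 = 240 :> R.
Proof. unfold_defect; ring. Qed.

End DefectIdentities.

Lemma frac_numden (R : idomainType) (f : {fraction R}) :
  f = (\n_(repr f))%:F / (\d_(repr f))%:F.
Proof.
set r := repr f.
have dnz : (\d_r)%:F != 0 by rewrite tofrac_eq0 denom_ratioP.
apply: (mulIf dnz); rewrite mulfVK //.
have -> : f = (\pi_({fraction R}) r)%qT by rewrite /r reprK.
unlock FracField.tofrac; rewrite -[LHS]FracField.pi_mul; apply/eqmodP => /=.
rewrite FracField.equivfE /FracField.mulf /=.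
rewrite !numden_Ratio ?mulf_neq0 ?oner_neq0 ?denom_ratioP //.
by rewrite ?mulr1 ?mul1r mulrC.
Qed.

(* The quotient rule does not depend on the chosen fraction: if
   n'/d' = n/d and the derivatives satisfy the product rule for
   n' d = d' n, both quotient-rule expressions agree. *)
Lemma quotient_rule_congr (K : fieldType) (n d n' d' dn dd dn' dd' : K) :
  d != 0 -> d' != 0 -> n' * d = d' * n ->
  dn' * d + n' * dd = dd' * n + d' * dn ->
  (dn' * d' - n' * dd') / d' ^+ 2 = (dn * d - n * dd) / d ^+ 2.
Proof.
move=> dnz d'nz eq_frac eq_deriv.
have def_n' : n' = d' * n / d.
  by apply: (mulIf dnz); rewrite (divfK dnz) eq_frac.
have def_dn' : dn' = (dd' * n + d' * dn - n' * dd) / d.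
  by apply: (mulIf dnz); rewrite (divfK dnz) -eq_deriv; ring.
rewrite def_dn' def_n'.
field; by rewrite dnz d'nz.
Qed.

Lemma pderiv_frac (F : fieldType) (i : 'I_3) (n d : {mpoly F[3]}) : d != 0 ->
  pderiv i (n%:F / d%:F) =
  ((mderiv i n)%:F * d%:F - n%:F * (mderiv i d)%:F) / (d%:F ^+ 2).
Proof.
move=> dnz0; have dnz : d%:F != 0 :> ratfun F by rewrite tofrac_eq0.
rewrite /pderiv /=.
move: (frac_numden (n%:F / d%:F)) (denom_ratioP (repr (n%:F / d%:F))).
move: (\n_(repr _)) (\d_(repr _)) => n' d' eq_nd d'nz0.
have d'nz : d'%:F != 0 :> ratfun F by rewrite tofrac_eq0.
have eq_frac : n' * d = d' * n.
  have : n'%:F * d%:F = d'%:F * n%:F :> ratfun F.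
    by rewrite -[n'%:F](divfK d'nz) -eq_nd mulrAC (divfK dnz) mulrC.
  by rewrite -!tofracM => /eqP; rewrite tofrac_eq => /eqP.
have eq_deriv := congr1 (mderiv i) eq_frac; rewrite !mderivM in eq_deriv.
have := congr1 (@FracField.tofrac _) eq_deriv.
rewrite !tofracD !tofracM => /(quotient_rule_congr dnz d'nz); apply.
by rewrite -!tofracM eq_frac.
Qed.

Definition o0 : 'I_3 := @Ordinal 3 0 isT.
Definition o1 : 'I_3 := @Ordinal 3 1 isT.
Definition o2 : 'I_3 := @Ordinal 3 2 isT.

Lemma sum3 (V : nmodType) (G : 'I_3 -> V) :
  \sum_(i < 3) G i = G o0 + G o1 + G o2.
Proof.
rewrite !big_ord_recr big_ord0 /= add0r.
by congr (G _ + G _ + G _); apply: val_inj.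
Qed.

Lemma ord3P (i : 'I_3) : [\/ i = o0, i = o1 | i = o2].
Proof.
case: i => [[|[|[|k]]] Hk] //.
- by constructor 1; apply: val_inj.
- by constructor 2; apply: val_inj.
- by constructor 3; apply: val_inj.
Qed.

(* The Kahan equations of adj3 a b, in the shape produced by expanding the
   sums in kahan_system. *)
Definition kahan_eqs (R : comPzRingType) (a b x y z t0 t1 t2 : R) : Prop :=
  [/\ t0 - x = t0 * (0 * x + 1 * y + a * z) + x * (0 * t0 + 1 * t1 + a * t2),
      t1 - y = t1 * (-1 * x + 0 * y + b * z) + y * (-1 * t0 + 0 * t1 + b * t2)
    & t2 - z = t2 * (- a * x + - b * y + 0 * z)
               + z * (- a * t0 + - b * t1 + 0 * t2)].

(* Cramer's rule for the Kahan system: when its determinant is nonzero, its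
   unique solution is t_k = N_k / D.  Uniqueness multiplies the residuals by
   the adjugate matrix. *)
Lemma kahan_eqs_solution (K : fieldType) (a b x y z t0 t1 t2 : K) :
  kahan_den a b x y z != 0 ->
  kahan_eqs a b x y z t0 t1 t2 <->
  [/\ t0 = kahan_num 0 a b x y z / kahan_den a b x y z,
      t1 = kahan_num 1 a b x y z / kahan_den a b x y z
    & t2 = kahan_num 2 a b x y z / kahan_den a b x y z].
Proof.
move=> Dnz; split; last first.
  move=> [-> -> ->]; rewrite /kahan_eqs /kahan_num.
  by move: Dnz; rewrite /kahan_den => Dnz; split; field.
have residual (l r : K) : l = r -> l - r = 0 by move->; rewrite subrr.
case=> /residual e0 /residual e1 /residual e2.
set E0 := t0 - x - _ in e0; set E1 := t1 - y - _ in e1.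
set E2 := t2 - z - _ in e2.
have solve k tk : kahan_den a b x y z * tk - kahan_num k a b x y z =
    kahan_adj k 0 a b x y z * E0 + kahan_adj k 1 a b x y z * E1
    + kahan_adj k 2 a b x y z * E2 ->
    tk = kahan_num k a b x y z / kahan_den a b x y z.
  rewrite e0 e1 e2 !mulr0 !addr0 => /eqP.
  by rewrite subr_eq0 => /eqP <-; rewrite mulrC mulKf.
by split; apply: solve;
  rewrite /E0 /E1 /E2 /kahan_adj /kahan_num /kahan_den /=; ring.
Qed.

(* The field lemma behind the bracket computation: writing the two Kahan
   coordinates as n_i / d, n_j / d with gradients (u_p / d^2), (v_p / d^2),
   their bracket minus c times their product is bracket_form / d^4. *)
Lemma bracket_frac (K : fieldType) (a b x y z u0 u1 u2 v0 v1 v2 c ni nj d : K) :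
  d != 0 ->
    0 * x * x * (u0 / d ^+ 2) * (v0 / d ^+ 2)
    + 1 * x * y * (u0 / d ^+ 2) * (v1 / d ^+ 2)
    + a * x * z * (u0 / d ^+ 2) * (v2 / d ^+ 2)
  + (-1 * y * x * (u1 / d ^+ 2) * (v0 / d ^+ 2)
    + 0 * y * y * (u1 / d ^+ 2) * (v1 / d ^+ 2)
    + b * y * z * (u1 / d ^+ 2) * (v2 / d ^+ 2))
  + (- a * z * x * (u2 / d ^+ 2) * (v0 / d ^+ 2)
    + - b * z * y * (u2 / d ^+ 2) * (v1 / d ^+ 2)
    + 0 * z * z * (u2 / d ^+ 2) * (v2 / d ^+ 2))
  - c * (ni / d) * (nj / d) =
  bracket_form a b x y z u0 u1 u2 v0 v1 v2 c ni nj d / d ^+ 4.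
Proof. by move=> dnz; rewrite /bracket_form; field. Qed.

Lemma mderivXU (R : nzRingType) (n : nat) (i j : 'I_n) :
  mderiv j ('X_i : {mpoly R[n]}) = (i == j)%:R.
Proof.
rewrite mderivX mnm1E; case: (i =P j) => [->|_]; last by rewrite scale0r.
have -> : (U_(j) - U_(j))%MM = 0%MM.
  by apply/mnmP => k; rewrite mnmBE mnm0E subnn.
by rewrite mpolyX0 scale1r.
Qed.

Lemma mderiv1 (R : nzRingType) (n : nat) (j : 'I_n) :
  mderiv j (1 : {mpoly R[n]}) = 0.
Proof. by rewrite -mpolyC1 mderivC. Qed.

Section KahanSolution.
Variables (F : fieldType) (a b : F).

Local Notation D := (kahan_den a%:MP b%:MP 'X_o0 'X_o1 ('X_o2 : {mpoly F[3]})).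
Local Notation N k := (kahan_num k a%:MP b%:MP 'X_o0 'X_o1 ('X_o2 : {mpoly F[3]})).
Local Notation U k p :=
  (deriv_num k p a%:MP b%:MP 'X_o0 'X_o1 ('X_o2 : {mpoly F[3]})).
Local Notation E i j := (defect i j a%:MP b%:MP 'X_o0 'X_o1 ('X_o2 : {mpoly F[3]})).

Definition defect_vanishes : Prop := forall i j : 'I_3, E i j = 0.

Lemma cst0 : cst 0 = 0 :> ratfun F. Proof. by rewrite /cst !rmorph0. Qed.
Lemma cst1 : cst 1 = 1 :> ratfun F. Proof. by rewrite /cst !rmorph1. Qed.
Lemma cstN (c : F) : cst (- c) = - cst c :> ratfun F.
Proof. by rewrite /cst !rmorphN. Qed.

(* D(0) = 1, so D is a nonzero polynomial *)
Lemma den_neq0 : D != 0.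
Proof.
apply/negP => /eqP /(congr1 (meval (fun _ => 0))).
rewrite kahan_den_morph /= !mevalXU !mevalC.
have -> : kahan_den a b 0 0 0 = 1 by rewrite /kahan_den; ring.
by move/eqP; rewrite oner_eq0.
Qed.

Ltac simpl_mderiv :=
  rewrite ?(mderivD, mderivB, mderivN, mderivM, mderivC, mderivXU, mderiv1) /=.

Lemma mderiv_den p : mderiv p D = kahan_den_d p a%:MP b%:MP 'X_o0 'X_o1 'X_o2.
Proof. by case: (ord3P p) => ->; rewrite /kahan_den /=; simpl_mderiv; ring. Qed.

Lemma mderiv_num (k p : 'I_3) :
  mderiv p (N k) = kahan_num_d k p a%:MP b%:MP 'X_o0 'X_o1 'X_o2.
Proof.
by case: (ord3P k) => ->; case: (ord3P p) => ->; rewrite /kahan_num /=;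
  simpl_mderiv; ring.
Qed.

Definition kahan_sol (k : 'I_3) : ratfun F := (N k)%:F / D%:F.

Lemma pderiv_sol (k p : 'I_3) : pderiv p (kahan_sol k) = (U k p)%:F / D%:F ^+ 2.
Proof.
rewrite /kahan_sol (pderiv_frac _ _ den_neq0) mderiv_num mderiv_den.
by rewrite /deriv_num tofracB !tofracM.
Qed.

Lemma kahan_system_eqs (xt : 'I_3 -> ratfun F) :
  kahan_system (adj3 a b) xt <->
  kahan_eqs (cst a) (cst b) (xvar F o0) (xvar F o1) (xvar F o2)
    (xt o0) (xt o1) (xt o2).
Proof.
split=> [H | [h0 h1 h2] i].
  by split; [have := H o0 | have := H o1 | have := H o2];
    rewrite !sum3 !mxE /= ?cstN ?cst1 ?cst0.
by case: (ord3P i) => ->; rewrite !sum3 !mxE /= ?cstN ?cst1 ?cst0.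
Qed.

Lemma kahan_systemE (xt : 'I_3 -> ratfun F) :
  kahan_system (adj3 a b) xt <-> xt =1 kahan_sol.
Proof.
have Dnz : kahan_den (cst a) (cst b) (xvar F o0) (xvar F o1) (xvar F o2) != 0.
  by rewrite -(kahan_den_morph (@FracField.tofrac _)) tofrac_eq0 den_neq0.
have solE k : kahan_sol k = kahan_num k (cst a) (cst b)
    (xvar F o0) (xvar F o1) (xvar F o2) /
    kahan_den (cst a) (cst b) (xvar F o0) (xvar F o1) (xvar F o2).
  by rewrite /kahan_sol (kahan_num_morph (@FracField.tofrac _))
    (kahan_den_morph (@FracField.tofrac _)).
rewrite kahan_system_eqs kahan_eqs_solution // -(solE o0) -(solE o1) -(solE o2).
split=> [[h0 h1 h2] i | eq_xt]; last by split; apply: eq_xt.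
by case: (ord3P i) => ->.
Qed.

Lemma adj_entry_cst (i j : 'I_3) :
  (adj_entry i j a%:MP b%:MP)%:F = cst (adj3 a b i j).
Proof.
by case: (ord3P i) => ->; case: (ord3P j) => ->;
  rewrite mxE /= /cst ?rmorphN ?rmorph1 ?rmorph0.
Qed.

Lemma bracket_sol (i j : 'I_3) :
  pbracket (adj3 a b) (kahan_sol i) (kahan_sol j)
  - cst (adj3 a b i j) * kahan_sol i * kahan_sol j = (E i j)%:F / D%:F ^+ 4.
Proof.
rewrite -adj_entry_cst /pbracket !sum3 !mxE /= ?cstN ?cst1 ?cst0 !pderiv_sol.
rewrite /kahan_sol bracket_frac; last by rewrite tofrac_eq0 den_neq0.
by rewrite [in RHS]/defect bracket_form_morph.
Qed.

Lemma kahan_poisson_defect : kahan_poisson (adj3 a b) <-> defect_vanishes.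
Proof.
have Dnz : D%:F ^+ 4 != 0 :> ratfun F by rewrite expf_neq0 // tofrac_eq0 den_neq0.
split=> [KP i j | HE xt /kahan_systemE eq_xt i j].
  have /eqP := KP _ (iffRL (kahan_systemE _) (frefl _)) i j.
  rewrite -subr_eq0 bracket_sol mulf_eq0 invr_eq0 (negbTE Dnz) orbF.
  by rewrite tofrac_eq0 => /eqP.
apply/eqP; rewrite -subr_eq0 !eq_xt bracket_sol HE.
by rewrite rmorph0 mul0r.
Qed.

Lemma defect_specialize : defect_vanishes ->
  forall (S : comNzRingType) (f : {rmorphism F -> S}) (x y z : S) (i j : 'I_3),
  defect i j (f a) (f b) x y z = 0.
Proof.
move=> HE S f x y z i j.
pose h (k : 'I_3) := if k == o0 then x else if k == o1 then y else z.
have := congr1 (mmap f h) (HE i j).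
by rewrite raddf0 defect_morph /= !mmapC !mmapX !mmap1U; apply.
Qed.

End KahanSolution.

Lemma lowest_coef_eq0 (R : idomainType) (n : nat) (c : R) (g : {poly R}) :
  'X^n * (c%:P + 'X * g) = 0 -> c = 0.
Proof.
move/eqP; rewrite mulf_eq0 expf_eq0 polyX_eq0 andbF /= => /eqP.
move/(congr1 (horner^~ 0)).
by rewrite hornerD hornerC hornerM hornerX mul0r addr0 horner0.
Qed.

Lemma cube_eq_self (R : idomainType) (x : R) :
  x ^+ 3 = x -> [\/ x = 0, x = 1 | x = -1].
Proof.
move/eqP; rewrite -subr_eq0.
have -> : x ^+ 3 - x = x * ((x - 1) * (x + 1)) by ring.
rewrite !mulf_eq0 subr_eq0 addr_eq0 => /or3P [] /eqP.
- by constructor 1.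
- by constructor 2.
- by constructor 3.
Qed.

Lemma double_eq0 (R : numFieldType) (x : R) : 2 * x = 0 -> x = 0.
Proof. by move/eqP; rewrite mulf_eq0 pnatr_eq0 /= => /eqP. Qed.

(* Necessity, first step: the lowest order terms of E_12 and E_02 along
   the curves (t, t^2, t^2) and (t^2, t, t^2) force a^3 = a and b^3 = b. *)
Lemma defect_vanishes_cubes (F : numFieldType) (a b : F) :
  defect_vanishes a b -> a ^+ 3 = a /\ b ^+ 3 = b.
Proof.
move=> /defect_specialize vanish.
have lowest_coef (u : F) (g : {poly F}) :
    'X ^+ 7 * (2 * u%:P + 'X * g) = 0 -> u = 0.
  move=> H; apply: double_eq0; apply: (lowest_coef_eq0 (n := 7) (g := g)).
  by rewrite rmorphM rmorph_nat.
split.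
- apply/eqP; rewrite -subr_eq0; apply/eqP.
  apply: (lowest_coef _ (cert_a a%:P b%:P 'X)).
  by rewrite rmorphB rmorphXn -defect_curve_a (vanish _ polyC _ _ _ o1 o2).
- apply/esym/eqP; rewrite -subr_eq0; apply/eqP.
  apply: (lowest_coef _ (cert_b a%:P b%:P 'X)).
  by rewrite rmorphB rmorphXn -defect_curve_b (vanish _ polyC _ _ _ o0 o2).
Qed.

(* Necessity: of the nine pairs with a, b in {0, 1, -1}, the three pairs
   outside the list give a nonzero value of some E_ij at an integer point. *)
Lemma defect_vanishes_good (F : numFieldType) (a b : F) :
  defect_vanishes a b -> good_pair a b.
Proof.
move=> vanish_ab; have [cube_a cube_b] := defect_vanishes_cubes vanish_ab.
have {vanish_ab} vanish := defect_specialize vanish_ab.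
have nonzero_value (n : nat) : n != 0%N -> n%:R = 0 :> F -> False.
  by move=> n_neq0 /eqP; rewrite pnatr_eq0 (negbTE n_neq0).
move: vanish; case: (cube_eq_self cube_a) => ->;
  case: (cube_eq_self cube_b) => -> vanish; rewrite /good_pair.
- by left.
- exfalso; apply: (nonzero_value 32) => //.
  by rewrite -defect_bad_0_1 (vanish _ idfun _ _ _ o0 o1).
- by right; left.
- by right; right; left.
- by right; right; right; right; left.
- by right; right; right; left.
- exfalso; apply: (nonzero_value 32) => //.
  by rewrite -defect_bad_m1_0 (vanish _ idfun _ _ _ o0 o1).
- exfalso; apply: (nonzero_value 240) => //.
  by rewrite -defect_bad_m1_1 (vanish _ idfun _ _ _ o0 o2).
- by right; right; right; right; right.
Qed.

Lemma kahan_poisson_good (F : numFieldType) (a b : F) :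
  kahan_poisson (adj3 a b) <-> good_pair a b.
Proof.
rewrite kahan_poisson_defect; split; first exact: defect_vanishes_good.
by move=> good; apply: (good_defect_eq0 (mpolyC 3 (R:=F))).
Qed.

(* F = R (any model of the reals, R : realType) and F = C = R[i] *)
Theorem mainTheorem5 :
  forall R : realType,
    (forall alpha beta : R,
        kahan_poisson (adj3 alpha beta) <-> good_pair alpha beta) /\
    (forall alpha beta : R[i],
        kahan_poisson (adj3 alpha beta) <-> good_pair alpha beta).
Proof. by move=> R; split=> alpha beta; exact: kahan_poisson_good. Qed.
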